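(* Let $G$ be a group with identity $e$, $A$ a set with at least two elements, and $\tau: A^G\to A^G$ a lazy cellular automaton. If $\mathrm{ord}(\tau) < \infty$, then the period of $\tau$ is $1$.
   Context: $A^G$ is the set of maps $G \to A$ with shift action $(g\cdot x)(h) := x(hg)$. A cellular automaton is a map $\tau : A^G \to A^G$ with a finite $S \subseteq G$ and $\mu : A^S \to A$ such that $\tau(x)(g) = \mu((g\cdot x)|_S)$. $\tau$ is lazy if there is such a local defining map $\mu : A^S \to A$ with $e \in S$ and $p \in A^S$ such that for all $z \in A^S$: $\mu(z) = z(e)$ iff $z \neq p$. $\tau^k$ is the $k$-fold composition, $\tau^0$ the identity; $\mathrm{ord}(\tau) := |\{\tau^k : k \in \mathbb{N}\}|$ with $\mathbb{N}=\{0,1,2,\dots\}$. If $\mathrm{ord}(\tau)<\infty$, the index $m \in \mathbb{N}$ and period $n \in \mathbb{Z}_+$ of $\tau$ are the smallest values such that $\tau^m = \tau^{m+n}$. *)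

From Stdlib Require Import List Arith.
Import ListNotations.

Record Group := {
  gcar :> Type;
  gmul : gcar -> gcar -> gcar;
  gone : gcar;
  ginv : gcar -> gcar;
  gmul_assoc : forall x y z, gmul x (gmul y z) = gmul (gmul x y) z;
  gmul_1l : forall x, gmul gone x = x;
  gmul_1r : forall x, gmul x gone = x;
  gmul_Vl : forall x, gmul (ginv x) x = gone;
  gmul_Vr : forall x, gmul x (ginv x) = gone
}.

Section CA.
Variables (G : Group) (A : Type).

Definition config := G -> A.

Definition shift (g : G) (x : config) : config := fun h => x (gmul G h g).

Definition finite_subset (S : G -> Prop) : Prop :=
  exists l : list G, forall g, S g -> In g l.

Definition restrict (S : G -> Prop) (x : config) : {g : G | S g} -> A :=
  fun s => x (proj1_sig s).

Definition local_rule (tau : config -> config) (S : G -> Prop)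
  (mu : ({g : G | S g} -> A) -> A) : Prop :=
  finite_subset S /\ forall (x : config) (g : G), tau x g = mu (restrict S (shift g x)).

Definition cellular_automaton (tau : config -> config) : Prop :=
  exists (S : G -> Prop) (mu : ({g : G | S g} -> A) -> A), local_rule tau S mu.

Definition lazy_CA (tau : config -> config) : Prop :=
  exists (S : G -> Prop) (mu : ({g : G | S g} -> A) -> A),
    local_rule tau S mu /\
    exists (He : S (gone G)) (p : {g : G | S g} -> A),
      forall z, mu z = z (exist S (gone G) He) <-> z <> p.

Definition cpow (tau : config -> config) (k : nat) : config -> config :=
  Nat.iter k (fun f => fun x => tau (f x)) (fun x => x).

Definition finite_order (tau : config -> config) : Prop :=
  exists l : list (config -> config), forall k, In (cpow tau k) l.

Definition index_period (tau : config -> config) (m n : nat) : Prop :=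
  0 < n /\ cpow tau m = cpow tau (m + n) /\
  (forall m' n', 0 < n' -> cpow tau m' = cpow tau (m' + n') -> m <= m') /\
  (forall n', 0 < n' -> cpow tau m = cpow tau (m + n') -> n <= n').

End CA.

From Stdlib Require Import List Arith Lia Classical FunctionalExtensionality FinFun.

(* A lazy automaton changes a cell only where the pattern p occurs, and then always
   writes the same symbol b := mu p.  So the set of b-cells can only grow along an
   orbit; if y returns to itself after n > 0 steps, a cell changed by the first step
   already holds b in y and could not have been changed at all.  Hence every periodic
   point is fixed, and since finite order makes tau^m periodic of some period n, the
   equation tau^m = tau^(m+n) improves to tau^m = tau^(m+1). *)

Lemma finite_range_repeats {X : Type} (f : nat -> X) (l : list X) :
  (forall k, In (f k) l) -> exists i j, i < j /\ f i = f j.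
Proof.
  intros Hl. apply NNPP. intros Hno.
  assert (Hinj : forall i j, In i (seq 0 (S (length l))) ->
                   In j (seq 0 (S (length l))) -> f i = f j -> i = j).
  { intros i j _ _ E.
    destruct (lt_eq_lt_dec i j) as [[Hlt|Heq]|Hlt]; auto; exfalso; apply Hno; eauto. }
  pose proof (Injective_map_NoDup_in f Hinj (seq_NoDup _ 0)) as Hnd.
  apply NoDup_incl_length with (l' := l) in Hnd.
  - rewrite length_map, length_seq in Hnd. lia.
  - intros y Hy. apply in_map_iff in Hy. destruct Hy as [k [<- _]]. apply Hl.
Qed.

Section Iterates.
Variables (G : Group) (A : Type) (tau : config G A -> config G A).

Notation cpow := (cpow G A tau).

Lemma cpow_add n m x : cpow (n + m) x = cpow n (cpow m x).
Proof. induction n; simpl; congruence. Qed.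

Lemma finite_order_eventually_periodic :
  finite_order G A tau -> exists m n, 0 < n /\ cpow m = cpow (m + n).
Proof.
  intros [l Hl]. destruct (finite_range_repeats cpow l Hl) as [i [j [Hij E]]].
  exists i, (j - i). split; [lia|]. now replace (i + (j - i)) with j by lia.
Qed.

Definition writes_only (b : A) : Prop :=
  forall x g, tau x g <> x g -> tau x g = b.

Lemma lazy_CA_writes_only : lazy_CA G A tau -> exists b, writes_only b.
Proof.
  intros [S [mu [[_ Hrule] [He [p Hp]]]]]. exists (mu p). intros x g Hchange.
  rewrite Hrule in *.
  assert (Hcell : restrict G A S (shift G A g x) (exist S (gone G) He) = x g).
  { unfold restrict, shift; simpl. now rewrite gmul_1l. }
  destruct (classic (restrict G A S (shift G A g x) = p)) as [<-|Hnp]; [reflexivity|].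
  exfalso. apply Hchange. rewrite <- Hcell. now apply Hp.
Qed.

Section WritesOnly.
Variables (b : A) (Hb : writes_only b).

Lemma writes_only_cpow_keeps j x g : x g = b -> cpow j x g = b.
Proof.
  intros Hx. induction j as [|j IH]; simpl; [exact Hx|].
  destruct (classic (tau (cpow j x) g = cpow j x g)) as [E|E].
  - congruence.
  - now apply Hb.
Qed.

Lemma writes_only_periodic_fixed n y : 0 < n -> cpow n y = y -> tau y = y.
Proof.
  intros Hn Hy. extensionality g. apply NNPP. intros Hchange.
  assert (Hback : cpow n y g = b).
  { replace n with (n - 1 + 1) by lia. rewrite cpow_add.
    apply writes_only_cpow_keeps. now apply Hb. }
  rewrite Hy in Hback. apply Hchange. rewrite Hback. now apply Hb.
Qed.

Lemma writes_only_period_one m n :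
  0 < n -> cpow m = cpow (m + n) -> cpow m = cpow (m + 1).
Proof.
  intros Hn Hmn. extensionality x. rewrite Nat.add_1_r. simpl. symmetry.
  apply (writes_only_periodic_fixed n); [exact Hn|].
  now rewrite <- cpow_add, Nat.add_comm, <- Hmn.
Qed.

End WritesOnly.
End Iterates.

Theorem proposition2 (G : Group) (A : Type)
  (hA : exists a b : A, a <> b)
  (tau : config G A -> config G A)
  (hlazy : lazy_CA G A tau)
  (hord : finite_order G A tau) :
  exists m : nat, index_period G A tau m 1.
Proof.
  set (periodic_from m := exists n, 0 < n /\ cpow G A tau m = cpow G A tau (m + n)).
  destruct (lazy_CA_writes_only G A tau hlazy) as [b Hb].
  destruct (dec_inh_nat_subset_has_unique_least_element periodic_from
              (fun m => classic _) (finite_order_eventually_periodic G A tau hord))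
    as [m [[[n [Hn Hmn]] Hleast] _]].
  exists m. repeat split.
  - lia.
  - exact (writes_only_period_one G A tau b Hb m n Hn Hmn).
  - intros m' n' Hn' E. apply Hleast. now exists n'.
  - intros n' Hn' _. exact Hn'.
Qed.
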